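(* Let $(\mathbf{C}, I^{\Delta})$ be a finite-type based chain complex of real inner product spaces with Hodge basis $I^\Delta$, and let $M^\Delta$ be the Hodge matching on $(\mathbf{C},I^{\Delta})$. Then $M^\Delta$ is a Morse matching and satisfies \begin{enumerate} \item $(M^\Delta)^0_n = \ker \Delta_n$ (i.e. the critical cells in degree $n$ span $\ker\Delta_n$), where $\Delta : \mathbf{C} \to \mathbf{C}$ is the combinatorial Laplacian of $\mathbf{C}$, and \item $\partial^{M^\Delta} = 0$, where $\partial^{M^\Delta}$ is the boundary operator of the Morse chain complex $\mathbf{C}^{M^\Delta}$. \end{enumerate}
   Context: $(\mathbf{C},\partial)$ is a degree-wise finite-dimensional chain complex of real vector spaces with an inner product on each $\mathbf{C}_n$; $\partial_n^\dagger:\mathbf{C}_{n-1}\to\mathbf{C}_n$ denotes the adjoint of $\partial_n$. The combinatorial Laplacian is $\Delta_n = \partial_n^\dagger\partial_n + \partial_{n+1}\partial_{n+1}^\dagger$, with $\Delta_n^+=\partial_{n+1}\partial_{n+1}^\dagger$ and $\Delta_n^-=\partial_n^\dagger\partial_n$; one has the orthogonal Hodge decomposition $\mathbf{C}_n = \operatorname{im}\partial_{n+1}\oplus\ker\Delta_n\oplus\operatorname{im}\partial_n^\dagger$. For a linear map $f:V\to W$ of real finite-dimensional inner product spaces, singular value decomposition gives orthonormal bases $\mathcal{R}(f)$ of $V$ and $\mathcal{L}(f)$ of $W$ consisting of eigenvectors of $f^\dagger f$ and $ff^\dagger$, such that for each nonzero eigenvalue $\lambda$ there are unique $v\in\mathcal{R}(f)$,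 $w\in\mathcal{L}(f)$ with $f(v)=\sqrt{\lambda}\,w$; $\mathcal{R}_+(f),\mathcal{L}_+(f)$ denote the elements with nonzero eigenvalue. A Hodge basis is $I^\Delta=\{I^\Delta_n\}$ with $I_n^{\Delta}= \mathcal{L}_+(\partial_{n+1}) \cup \mathcal{R}_+(\partial_n) \cup \mathcal{B}(\ker\Delta_n)$ for some basis $\mathcal{B}(\ker\Delta_n)$ of $\ker\Delta_n$ (each basis vector spanning a one-dimensional summand). The Hodge matching is $M^\Delta := \bigcup_i \{ v \in \mathcal{R}_+(\partial_i) \to w \in \mathcal{L}_+(\partial_i) \mid \partial_i v = \sigma w, \sigma \neq 0 \}$. For a based complex $(\mathbf{C},I)$ with $\mathbf{C}_n=\bigoplus_{\alpha\in I_n}C_\alpha$ and components $\partial_{\beta,\alpha}:C_\alpha\to C_\beta$, the graph $\mathcal{G}(\mathbf{C})$ has vertices $I$ and edges $\alpha\to\beta$ whenever $\partial_{\beta,\alpha}\neq0$; a Morse matching $M$ is a set of edges such that each vertex is in at most one edge of $M$, each $\partial_{\beta,\alpha}$ for $\alpha\to\beta$ in $M$ is an isomorphism, and the relation ''there is a directed path from $\alpha$ to $\beta$ in $\mathcal{G}(\mathbf{C})$ with the edges of $M$ reversed'' is a partial order on each $I_n$. $M^0$ denotes the unmatched (critical) cells; the Morse complex $\mathbf{C}^M_n=\bigoplus_{\alpha\in I_n\cap M^0}C_\alpha$ has boundary $\partial^{M}(x)=\sum_{\beta\in M^0\cap I_{n-1}}\Gamma_{\beta,\alpha}(x)$, where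 $\Gamma_{\beta,\alpha}$ is the sum over directed paths from $\alpha$ to $\beta$ in the reversed graph of the composites of components, with matched edges contributing $-\partial_{\beta,\alpha}^{-1}$. *)

From HB Require Import structures.
From mathcomp Require Import all_boot all_order all_algebra.
From mathcomp Require Import boolp reals.
From Stdlib Require Import Relations.

Unset Printing Implicit Defensive.
Import Order.TTheory GRing.Theory Num.Theory.
Local Open Scope ring_scope.

Section Defs.
Variable R : realType.

(* Vectors are row vectors; a linear map f : R^p -> R^q is x |-> x *m f.   *)
(* An inner product on R^p is <x,y> = (x *m G *m y^T) 0 0 with G symmetric *)
(* positive definite.                                                      *)
Definition inner_prod_mx p (G : 'M[R]_p) : Prop :=
  G^T = G /\ forall x : 'rV[R]_p, x != 0 -> 0 < (x *m G *m x^T) 0 0.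

(* adjoint f^dagger : R^q -> R^p of f : R^p -> R^q, for Grams Gs, Gt:
   <x f, y>_t = <x, y f^dagger>_s *)
Definition adjoint {p q} (Gs : 'M[R]_p) (Gt : 'M[R]_q) (f : 'M[R]_(p, q))
  : 'M[R]_(q, p) := Gt *m f^T *m invmx Gs.

(* SVD bases: rows of Rb form an orthonormal basis of the source consisting of
   eigenvectors of f^dagger f, rows of Lb an orthonormal basis of the target
   of eigenvectors of f f^dagger; elements with nonzero eigenvalue are paired:
   f v = sqrt(lambda) w. *)
Definition svd_bases {p q} (Gs : 'M[R]_p) (Gt : 'M[R]_q) (f : 'M[R]_(p, q))
    (Rb : 'M[R]_p) (Lb : 'M[R]_q) : Prop :=
  let fa := adjoint Gs Gt f in
  [/\ Rb *m Gs *m Rb^T = 1%:M /\ Lb *m Gt *m Lb^T = 1%:M,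
      forall i, exists l : R, row i Rb *m (f *m fa) = l *: row i Rb,
      forall j, exists l : R, row j Lb *m (fa *m f) = l *: row j Lb,
      (forall i, row i Rb *m (f *m fa) != 0 ->
         exists (l : R) (j : 'I_q),
           [/\ row i Rb *m (f *m fa) = l *: row i Rb,
               row j Lb *m (fa *m f) != 0 &
               row i Rb *m f = Num.sqrt l *: row j Lb]) &
      (forall j, row j Lb *m (fa *m f) != 0 ->
         exists (l : R) (i : 'I_p),
           [/\ row i Rb *m (f *m fa) = l *: row i Rb,
               row i Rb *m (f *m fa) != 0 &
               row i Rb *m f = Num.sqrt l *: row j Lb])].

Definition mxn {m n} (A : 'M[R]_(m, n)) (i j : nat) : R :=
  match (insub i : option 'I_m), (insub j : option 'I_n) with
  | Some a, Some b => A a b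
  | _, _ => 0
  end.

Definition is_poset {T : Type} (r : T -> T -> Prop) : Prop :=
  [/\ forall a, r a a,
      forall a b c, r a b -> r b c -> r a c &
      forall a b, r a b -> r b a -> a = b].

Section Morse.
Variable d : nat -> nat.
(* c n a b = the component  partial_{b,a}  (a scalar, the cells being
   one-dimensional) of the boundary C_{n+1} -> C_n from cell a to cell b *)
Variable c : forall n, 'M[R]_(d n.+1, d n).
(* M n a b : the edge a -> b (a in degree n+1, b in degree n) is matched *)
Variable M : forall n, 'I_(d n.+1) -> 'I_(d n) -> bool.

(* vertices of the graph are pairs (degree, index) *)
Definition cn (k i j : nat) : R := mxn (c k) i j.
Definition Mn (k i j : nat) : bool :=
  match (insub i : option 'I_(d k.+1)), (insub j : option 'I_(d k)) with
  | Some a, Some b => M k a b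
  | _, _ => false
  end.

(* directed edges of G(C) with the edges of M reversed *)
Definition stepM (u v : nat * nat) : bool :=
  ((u.1 == v.1.+1) && (cn v.1 u.2 v.2 != 0) && ~~ Mn v.1 u.2 v.2)
  || ((v.1 == u.1.+1) && Mn u.1 v.2 u.2).

Definition reachM : nat * nat -> nat * nat -> Prop :=
  clos_refl_trans (nat * nat) (fun u v => stepM u v).

Definition morse_matching : Prop :=
  [/\ (forall n a b, M n a b -> c n a b != 0),
      (forall n a b b', M n a b -> M n a b' -> b = b'),
      (forall n a a' b, M n a b -> M n a' b -> a = a'),
      (forall n (a : 'I_(d n.+1)) b g, M n a b -> M n.+1 g a -> False) &
      (forall n, is_poset (fun a b : 'I_(d n) => reachM (n, val a) (n, val b)))].

Definition critical (k i : nat) : Prop :=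
  [/\ (i < d k)%N, forall j, ~~ Mn k j i & forall j, (0 < k)%N -> ~~ Mn k.-1 i j].

Definition stepw (u v : nat * nat) : R :=
  if (u.1 == v.1.+1) && ~~ Mn v.1 u.2 v.2 then cn v.1 u.2 v.2
  else if (v.1 == u.1.+1) && Mn u.1 v.2 u.2 then - (cn u.1 v.2 u.2)^-1
  else 0.

Fixpoint pathw (u : nat * nat) (s : seq (nat * nat)) : R :=
  match s with
  | [::] => 1
  | v :: s' => stepw u v * pathw v s'
  end.

(* every path from a cell of degree n+1 to one of degree n stays in
   degrees <= n+1; vertices in those degrees are encoded in W n *)
Definition maxd n := \max_(k < n.+2) d k.
Definition nverts n := \sum_(k < n.+2) d k.
Definition toV {n} (x : 'I_n.+2 * 'I_(maxd n)) : nat * nat :=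
  (val x.1, val x.2).
Definition pth {n} (b : nat) {m} (t : m.-tuple ('I_n.+2 * 'I_(maxd n))) :=
  rcons [seq toV x | x <- t] (n, b).

(* Gamma_{b,a} for a in degree n+1, b in degree n: sum over all directed
   paths from a to b (with edges of M reversed) of the composite weights *)
Definition morse_coef n (a b : nat) : R :=
  \sum_(m < (nverts n).+1)
    \sum_(t : m.-tuple ('I_n.+2 * 'I_(maxd n))
          | path stepM (n.+1, a) (pth b t) && uniq ((n.+1, a) :: pth b t))
      pathw (n.+1, a) (pth b t).

End Morse.

Section Hodge.
Variable d : nat -> nat.
(* D n = boundary partial_{n+1} : C_{n+1} -> C_n ; partial_0 = 0 *)
Variable D : forall n, 'M[R]_(d n.+1, d n).
Variable G : forall n, 'M[R]_(d n).

Definition is_complex : Prop := forall n, D n.+1 *m D n = 0.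

(* adj n = partial_{n+1}^dagger : C_n -> C_{n+1} *)
Definition adj n : 'M[R]_(d n, d n.+1) := adjoint (G n.+1) (G n) (D n).

Definition lap n : 'M[R]_(d n) :=
  adj n *m D n +
  (match n return 'M[R]_(d n) with 0 => 0 | m.+1 => D m *m adj m end).

(* SVD data for partial_{n+1}: Rb n basis of C_{n+1}, Lb n basis of C_n *)
Variable Rb : forall n, 'M[R]_(d n.+1).
Variable Lb : forall n, 'M[R]_(d n).

Definition Rplus {n} (i : 'I_(d n.+1)) : Prop :=
  row i (Rb n) *m (D n *m adj n) != 0.
Definition Lplus {n} (j : 'I_(d n)) : Prop :=
  row j (Lb n) *m (adj n *m D n) != 0.

Definition inL {n} (v : 'rV[R]_(d n)) : Prop :=
  exists j, Lplus j /\ v = row j (Lb n).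
Definition inR {n} : 'rV[R]_(d n) -> Prop :=
  match n return 'rV[R]_(d n) -> Prop with
  | 0 => fun _ => False
  | m.+1 => fun v => exists i, Rplus i /\ v = row i (Rb m)
  end.

(* B n : the Hodge basis of C_n (its rows are the basis vectors, the cells of
   degree n are indexed by 'I_(d n)):
   I_n = L_+(partial_{n+1}) u R_+(partial_n) u (a basis of ker Delta_n) *)
Variable B : forall n, 'M[R]_(d n).

Definition hodge_basis : Prop :=
  [/\ forall n, B n \in unitmx,
      forall n (a : 'I_(d n)),
        inL (row a (B n)) \/ inR (row a (B n)) \/ row a (B n) *m lap n = 0,
      forall n j, Lplus j -> exists a : 'I_(d n), row a (B n) = row j (Lb n),
      forall m i, Rplus i -> exists a : 'I_(d m.+1), row a (B m.+1) = row i (Rb m) &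
      forall n (x : 'rV[R]_(d n)), x *m lap n = 0 ->
        exists cf : 'I_(d n) -> R,
          x = \sum_(a | row a (B n) *m lap n == 0) cf a *: row a (B n)].

(* components of the boundary in the basis B:
   row a (B n.+1) *m D n = \sum_b (bcoef n) a b *: row b (B n) *)
Definition bcoef n : 'M[R]_(d n.+1, d n) := B n.+1 *m D n *m invmx (B n).

Definition hodge_matching n (a : 'I_(d n.+1)) (b : 'I_(d n)) : bool :=
  `[< exists (i : 'I_(d n.+1)) (j : 'I_(d n)),
        [/\ Rplus i, Lplus j, row a (B n.+1) = row i (Rb n),
            row b (B n) = row j (Lb n) &
            exists s : R, s != 0 /\ row i (Rb n) *m D n = s *: row j (Lb n)] >].

End Hodge.
End Defs.


Arguments inner_prod_mx {R p}.
Arguments svd_bases {R p q}.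
Arguments is_complex {R d}.
Arguments lap {R d}.
Arguments hodge_basis {R d}.
Arguments bcoef {R d}.
Arguments hodge_matching {R d}.
Arguments morse_matching {R d}.
Arguments critical {d}.
Arguments morse_coef {R d}.

From HB Require Import structures.
From mathcomp Require Import all_boot all_order all_algebra.
From mathcomp Require Import boolp reals.
From Stdlib Require Import Relations.
Import Order.TTheory GRing.Theory Num.Theory.
Local Open Scope ring_scope.
Set Implicit Arguments. Unset Strict Implicit.

(* In the Hodge basis the boundary of every basis vector is either zero
   (vectors of L_+ and harmonic vectors are cycles) or a nonzero multiple of
   its partner in the Hodge matching (a vector of R_+ is sent to sqrt(lambda)
   times a vector of L_+). Hence every nonzero component of the boundary is a
   matched edge, so once matched edges are reversed every edge of the graph
   raises the degree: reachability is then antisymmetric, and no path leads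
   from a cell of degree n+1 to one of degree n, so the Morse boundary
   vanishes. A basis vector is critical iff it is harmonic, because harmonic
   vectors are killed by both the boundary and its adjoint, whereas every
   vector of L_+ and of R_+ is matched. *)

Section UnitmxRows.
Variables (F : fieldType) (p : nat) (A : 'M[F]_p).
Hypothesis A_unit : A \in unitmx.

Lemma row_mul_invmx a : row a A *m invmx A = delta_mx 0 a.
Proof. by rewrite -row_mul mulmxV // row1. Qed.

Lemma scale_row_invmx_coord s a b :
  (s *: row a A *m invmx A) 0 b = s * (a == b)%:R.
Proof. by rewrite -scalemxAl row_mul_invmx !mxE eqxx eq_sym. Qed.

Lemma row_scale_inj s a a' : row a' A = s *: row a A -> a' = a.
Proof.
move=> /(congr1 (fun u : 'rV[F]_p => (u *m invmx A) 0 a')).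
rewrite scale_row_invmx_coord row_mul_invmx !mxE !eqxx.
by case: eqVneq => [//|_]; rewrite mulr0 => /eqP; rewrite oner_eq0.
Qed.

End UnitmxRows.

Section InnerProduct.
Variable R : realType.

Lemma trmx11 (A : 'M[R]_1) : A^T = A.
Proof. by rewrite [A]mx11_scalar tr_scalar_mx. Qed.

Section Form.
Variables (p : nat) (A : 'M[R]_p).
Hypothesis A_ip : inner_prod_mx A.

Lemma inner_prod_mx_sym (u v : 'rV[R]_p) : u *m A *m v^T = v *m A *m u^T.
Proof.
by case: A_ip => AT _; rewrite -[LHS]trmx11 !trmx_mul trmxK AT mulmxA.
Qed.

Lemma inner_prod_mx_unit : A \in unitmx.
Proof.
case: A_ip => _ Apos; rewrite -row_free_unit -kermx_eq0.
apply/rowV0P => v /sub_kermxP vA0; apply/eqP; apply: contraT => /Apos.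
by rewrite vA0 mul0mx mxE ltxx.
Qed.

Lemma inner_prod_mx_ge0 (x : 'rV[R]_p) : 0 <= (x *m A *m x^T) 0 0.
Proof.
case: A_ip => _ Apos; have [->|/Apos/ltW//] := eqVneq x 0.
by rewrite !mul0mx mxE.
Qed.

Lemma inner_prod_mx_eq0 (x : 'rV[R]_p) : (x *m A *m x^T) 0 0 = 0 -> x = 0.
Proof.
case: A_ip => _ Apos x0; apply/eqP; apply: contraT => /Apos.
by rewrite x0 ltxx.
Qed.

End Form.

Section Adjoint.
Variables (p q : nat) (Gs : 'M[R]_p) (Gt : 'M[R]_q) (f : 'M[R]_(p, q)).
Hypotheses (Gs_ip : inner_prod_mx Gs) (Gt_ip : inner_prod_mx Gt).
Local Notation fa := (adjoint R Gs Gt f).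

Lemma adjointP (y : 'rV[R]_p) (z : 'rV[R]_q) :
  y *m f *m Gt *m z^T = y *m Gs *m (z *m fa)^T.
Proof.
have Gs_unit := inner_prod_mx_unit Gs_ip.
case: Gs_ip Gt_ip => GsT _ [GtT _].
rewrite /adjoint !trmx_mul trmx_inv GsT trmxK GtT !mulmxA.
by rewrite -[y *m Gs *m _]mulmxA mulmxV ?mulmx1.
Qed.

(* Pairing [x (f^dagger f + E)] with [x] gives |x f^dagger|^2 + <x, x E>. *)
Lemma adjoint_mul_addr_eq0 (E : 'M[R]_q) (x : 'rV[R]_q) :
  x *m (fa *m f + E) = 0 -> 0 <= (x *m Gt *m (x *m E)^T) 0 0 ->
  x *m fa = 0 /\ (x *m Gt *m (x *m E)^T) 0 0 = 0.
Proof.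
move=> xker E_ge0.
have : (x *m Gt *m (x *m (fa *m f + E))^T) 0 0 = 0.
  by rewrite xker trmx0 mulmx0 mxE.
rewrite mulmxDr linearD /= mulmxDr mxE inner_prod_mx_sym // mulmxA adjointP.
move/eqP; rewrite paddr_eq0 ?inner_prod_mx_ge0 // => /andP[/eqP fa0 /eqP E0].
by split=> //; apply: inner_prod_mx_eq0 fa0.
Qed.

End Adjoint.
End InnerProduct.

Section MatchedSupport.
Variables (R : realType) (d : nat -> nat).
Variable c : forall n, 'M[R]_(d n.+1, d n).
Variable M : forall n, 'I_(d n.+1) -> 'I_(d n) -> bool.
Arguments M : clear implicits.

Lemma MnP k i j :
  reflect (exists (a : 'I_(d k.+1)) (b : 'I_(d k)),
             [/\ val a = i, val b = j & M k a b])
          (Mn d M k i j).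
Proof.
rewrite /Mn; case: insubP => [a _ <-|ai]; last first.
  by constructor=> -[a [b [ai' _ _]]]; rewrite -ai' ltn_ord in ai.
case: insubP => [b _ <-|bj]; last first.
  by constructor=> -[a' [b [_ bj' _]]]; rewrite -bj' ltn_ord in bj.
apply: (iffP idP) => [Mab|[a' [b' [/val_inj -> /val_inj -> //]]]].
by exists a, b.
Qed.

Lemma Mn_val k (a : 'I_(d k.+1)) (b : 'I_(d k)) : Mn d M k a b = M k a b.
Proof. by rewrite /Mn !valK. Qed.

Hypothesis support_matched : forall n a b, c n a b != 0 -> M n a b.

Lemma stepM_degree u v : stepM R d c M u v -> v.1 = u.1.+1.
Proof.
case/orP=> [/andP[/andP[_]]|/andP[/eqP -> _] //].
rewrite /cn /mxn /Mn.
case: (insub u.2) => [a|]; last by rewrite eqxx.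
case: (insub v.2) => [b|]; last by rewrite eqxx.
by move=> /support_matched ->.
Qed.

Lemma reachM_degree u v : reachM R d c M u v -> u = v \/ (u.1 < v.1)%N.
Proof.
elim=> [x y /stepM_degree ->|x|x y z _ IHxy _ IHyz]; [by right|by left|].
case: IHxy => [-> //|xy]; case: IHyz => [<-|yz]; right=> //.
exact: ltn_trans yz.
Qed.

Lemma reachM_poset n :
  is_poset (fun a b : 'I_(d n) => reachM R d c M (n, val a) (n, val b)).
Proof.
split=> [a|a b e|a b].
- exact: rt_refl.
- exact: rt_trans.
- by case/reachM_degree => [[/val_inj]|/=]; rewrite ?ltnn.
Qed.

Lemma path_stepM_degree u s :
  path (stepM R d c M) u s -> all (fun v => u.1 < v.1)%N s.
Proof.
elim: s u => [//|v s IHs] u /= /andP[/stepM_degree uv /IHs].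
rewrite uv ltnSn => /allP sv; apply/allP => w /sv /=.
exact: ltnW.
Qed.

Lemma morse_coef_eq0 n a b : morse_coef c M n a b = 0.
Proof.
rewrite /morse_coef big1 // => m _; rewrite big_pred0 // => t.
apply/negbTE/negP => /andP[/path_stepM_degree/allP/(_ (n, b)) nb _].
by move: nb; rewrite /pth mem_rcons mem_head /= ltnNge leqnSn => /(_ isT).
Qed.

End MatchedSupport.

Section HodgeMatching.
Variables (R : realType) (d : nat -> nat).
Variables (D : forall n, 'M[R]_(d n.+1, d n)) (G : forall n, 'M[R]_(d n)).
Variables (Rb : forall n, 'M[R]_(d n.+1)) (Lb B : forall n, 'M[R]_(d n)).
Hypothesis D_complex : is_complex D.
Hypothesis G_ip : forall n, inner_prod_mx (G n).
Hypothesis D_svd : forall n, svd_bases (G n.+1) (G n) (D n) (Rb n) (Lb n).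
Hypothesis B_hodge : hodge_basis D G Rb Lb B.

Local Notation adj := (adj R d D G).
Local Notation Rplus := (Rplus R d D G Rb).
Local Notation Lplus := (Lplus R d D G Lb).
Local Notation M := (hodge_matching D G Rb Lb B).

Lemma B_unit n : B n \in unitmx.
Proof. by case: B_hodge. Qed.

Lemma lap_form_boundary m (x : 'rV[R]_(d m.+1)) :
  x *m G m.+1 *m (x *m (D m *m adj m))^T = x *m D m *m G m *m (x *m D m)^T.
Proof. by rewrite mulmxA -(adjointP _ (G_ip m.+1) (G_ip m)). Qed.

Lemma ker_lapS m (x : 'rV[R]_(d m.+1)) :
  x *m lap D G m.+1 = 0 -> x *m adj m.+1 = 0 /\ x *m D m = 0.
Proof.
move=> xker; have := adjoint_mul_addr_eq0 (G_ip m.+2) (G_ip m.+1) xker.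
rewrite lap_form_boundary (inner_prod_mx_ge0 (G_ip m)) => /(_ isT)[adj0 D0].
by split=> //; apply: inner_prod_mx_eq0 D0.
Qed.

Lemma ker_lap_adj n (x : 'rV[R]_(d n)) : x *m lap D G n = 0 -> x *m adj n = 0.
Proof.
case: n x => [|m] x xker; last by case: (ker_lapS xker).
have := adjoint_mul_addr_eq0 (G_ip 1) (G_ip 0) xker.
by rewrite !mulmx0 trmx0 mulmx0 mxE lexx => -[].
Qed.

Lemma Rplus_eigen_neq0 k (i : 'I_(d k.+1)) : Rplus i ->
  exists2 l, l != 0 & row i (Rb k) *m (D k *m adj k) = l *: row i (Rb k).
Proof.
case: (D_svd k) => _ eig _ _ _ Ri; have [l il] := eig i.
by exists l => //; apply: contraNneq Ri => l0; rewrite /Rplus il l0 scale0r.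
Qed.

Lemma Rplus_boundary_scale_neq0 k (i : 'I_(d k.+1)) s (w : 'rV[R]_(d k)) :
  Rplus i -> row i (Rb k) *m D k = s *: w -> s != 0.
Proof.
move=> Ri iD; apply: contraNneq Ri => s0.
by rewrite /Rplus mulmxA iD s0 scale0r mul0mx.
Qed.

Lemma hodge_matching_boundary k (a : 'I_(d k.+1)) (b : 'I_(d k)) : M k a b ->
  exists2 s, s != 0 & row a (B k.+1) *m D k = s *: row b (B k).
Proof. by case/asboolP=> i [j [_ _ -> -> [s [s0 ->]]]]; exists s. Qed.

Lemma hodge_matching_Rplus k (a : 'I_(d k.+1)) (b : 'I_(d k)) : M k a b ->
  exists2 i, Rplus i & row a (B k.+1) = row i (Rb k).
Proof. by case/asboolP=> i [j [Ri _ ai _ _]]; exists i. Qed.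

Lemma hodge_matching_Lplus k (a : 'I_(d k.+1)) (b : 'I_(d k)) : M k a b ->
  exists2 j, Lplus j & row b (B k) = row j (Lb k).
Proof. by case/asboolP=> i [j [_ Lj _ bj _]]; exists j. Qed.

Lemma Rplus_matched k (a i : 'I_(d k.+1)) :
  Rplus i -> row a (B k.+1) = row i (Rb k) -> exists b, M k a b.
Proof.
move=> Ri ai; case: (D_svd k) => _ _ _ RL _.
have [l [j [_ Lj iD]]] := RL i Ri.
have [_ _ L_in_B _ _] := B_hodge; have [b bj] := L_in_B k j Lj.
exists b; apply/asboolP; exists i, j; split=> //.
by exists (Num.sqrt l); rewrite (Rplus_boundary_scale_neq0 Ri iD).
Qed.

Lemma Lplus_matched k (b j : 'I_(d k)) :
  Lplus j -> row b (B k) = row j (Lb k) -> exists a, M k a b.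
Proof.
move=> Lj bj; case: (D_svd k) => _ _ _ _ LR.
have [l [i [_ Ri iD]]] := LR j Lj.
have [_ _ _ R_in_B _] := B_hodge; have [a ai] := R_in_B k i Ri.
exists a; apply/asboolP; exists i, j; split=> //.
by exists (Num.sqrt l); rewrite (Rplus_boundary_scale_neq0 Ri iD).
Qed.

Lemma hodge_boundary_cases k (a : 'I_(d k.+1)) :
  row a (B k.+1) *m D k = 0 \/ exists b, M k a b.
Proof.
have [_ cells _ _ _] := B_hodge.
case: (cells k.+1 a) => [[j [Lj aj]]|[[i [Ri ai]]|aker]].
- left; case: (D_svd k.+1) => _ _ eig _ _; have [l jl] := eig j.
  have l0 : l != 0 by apply: contraNneq Lj => l0; rewrite /Lplus jl l0 scale0r.
  have : l *: (row a (B k.+1) *m D k) = 0.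
    by rewrite scalemxAl aj -jl -!mulmxA D_complex !mulmx0.
  by move/eqP; rewrite scaler_eq0 (negbTE l0) => /eqP.
- by right; apply: Rplus_matched Ri ai.
- by left; case: (ker_lapS aker).
Qed.

Lemma bcoef_scaled k (a : 'I_(d k.+1)) (b b' : 'I_(d k)) s :
  row a (B k.+1) *m D k = s *: row b (B k) ->
  bcoef D B k a b' = s * (b == b')%:R.
Proof.
move=> aD.
have -> : bcoef D B k a b' = row a (bcoef D B k) 0 b' by rewrite !mxE.
by rewrite /bcoef !row_mul aD (scale_row_invmx_coord (B_unit k)).
Qed.

Lemma bcoef_neq0_matched k (a : 'I_(d k.+1)) (b : 'I_(d k)) :
  bcoef D B k a b != 0 -> M k a b.
Proof.
case: (hodge_boundary_cases a) => [aD|[b' Mab']].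
  have aD0 : row a (B k.+1) *m D k = 0 *: row b (B k) by rewrite aD scale0r.
  by rewrite (bcoef_scaled b aD0) mul0r eqxx.
have [s _ aD] := hodge_matching_boundary Mab'.
rewrite (bcoef_scaled _ aD).
by case: (eqVneq b' b) => [<- //|_]; rewrite mulr0 eqxx.
Qed.

Lemma hodge_matching_neq0 k (a : 'I_(d k.+1)) (b : 'I_(d k)) :
  M k a b -> bcoef D B k a b != 0.
Proof.
case/hodge_matching_boundary=> s s0 aD.
by rewrite (bcoef_scaled _ aD) eqxx mulr1.
Qed.

Lemma hodge_matching_fun k (a : 'I_(d k.+1)) (b b' : 'I_(d k)) :
  M k a b -> M k a b' -> b = b'.
Proof.
move=> /hodge_matching_boundary[s s0 aD] /hodge_matching_neq0.
by rewrite (bcoef_scaled _ aD); case: (eqVneq b b') => // _; rewrite mulr0 eqxx.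
Qed.

(* Any partner of [b] is a nonzero multiple of [row b (B k) *m adj k], as
   [D k *m adj k] acts on R_+ by nonzero eigenvalues. *)
Lemma hodge_matching_inj k (a a' : 'I_(d k.+1)) (b : 'I_(d k)) :
  M k a b -> M k a' b -> a = a'.
Proof.
have partner a0 : M k a0 b -> exists2 t, t != 0 &
    row a0 (B k.+1) = t *: (row b (B k) *m adj k).
  move=> Ma0b; have [s s0 a0D] := hodge_matching_boundary Ma0b.
  have [i Ri a0i] := hodge_matching_Rplus Ma0b.
  have [l l0 il] := Rplus_eigen_neq0 Ri.
  exists (l^-1 * s); first by rewrite mulf_neq0 ?invr_eq0.
  rewrite -a0i mulmxA a0D in il.
  by rewrite -scalerA scalemxAl il scalerA mulVf ?scale1r.
move=> /partner[t _ aB] /partner[t' t'0 a'B].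
apply: (row_scale_inj (B_unit k.+1) (s := t / t')).
by rewrite aB a'B scalerA divfK.
Qed.

Lemma hodge_matching_chain k (a : 'I_(d k.+1)) (b : 'I_(d k))
    (g : 'I_(d k.+2)) :
  M k a b -> M k.+1 g a -> False.
Proof.
move=> /hodge_matching_Rplus[i Ri ai] /hodge_matching_boundary[s s0 gD].
have : s *: (row a (B k.+1) *m D k) = 0.
  by rewrite scalemxAl -gD -mulmxA D_complex mulmx0.
move/eqP; rewrite scaler_eq0 (negbTE s0) /= => /eqP aD.
by move: Ri; rewrite /Rplus -ai mulmxA aD mul0mx eqxx.
Qed.

Lemma hodge_matching_morse : morse_matching (bcoef D B) M.
Proof.
split.
- exact: hodge_matching_neq0.
- exact: hodge_matching_fun.
- exact: hodge_matching_inj.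
- exact: hodge_matching_chain.
- exact: reachM_poset bcoef_neq0_matched.
Qed.

Lemma critical_ker_lap n (a : 'I_(d n)) :
  critical M n a <-> row a (B n) *m lap D G n = 0.
Proof.
split=> [[_ unmatched_up unmatched_down]|aker].
  have [_ cells _ _ _] := B_hodge.
  case: (cells n a) => [[j [Lj aj]]|[|//]].
    have [g Mga] := Lplus_matched Lj aj.
    by have := unmatched_up g; rewrite Mn_val Mga.
  case: n a unmatched_up unmatched_down => [//|m] a _ unmatched_down.
  move=> [i [Ri ai]].
  have [b Mab] := Rplus_matched Ri ai.
  by have := unmatched_down b isT; rewrite Mn_val Mab.
split=> [|j|]; first exact: ltn_ord.
  apply/negP => /MnP[g [b [_ /val_inj ba Mgb]]]; subst b.
  have [j' Lj' aj'] := hodge_matching_Lplus Mgb.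
  by move: Lj'; rewrite /Lplus -aj' mulmxA (ker_lap_adj aker) mul0mx eqxx.
case: n a aker => [//|m] a aker j _.
apply/negP => /MnP[a' [b [/val_inj a'a _ Ma'b]]]; subst a'.
have [i Ri ai] := hodge_matching_Rplus Ma'b.
have [_ aD] := ker_lapS aker.
by move: Ri; rewrite /Rplus -ai mulmxA aD mul0mx eqxx.
Qed.

Lemma ker_lap_critical_span n (x : 'rV[R]_(d n)) :
  x *m lap D G n = 0 <->
  exists cf : 'I_(d n) -> R,
    (forall a : 'I_(d n), ~ critical M n a -> cf a = 0) /\
    x = \sum_(a : 'I_(d n)) cf a *: row a (B n).
Proof.
split=> [xker|[cf [cf0 ->]]].
  have [_ _ _ _ ker_span] := B_hodge; have [cf ->] := ker_span n x xker.
  exists (fun a => if row a (B n) *m lap D G n == 0 then cf a else 0); split.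
    by move=> a ncrit; case: eqP => // /critical_ker_lap /ncrit.
  rewrite big_mkcond; apply: eq_bigr => a _.
  by case: ifP => _; rewrite ?scale0r.
rewrite mulmx_suml big1 // => a _.
have [/critical_ker_lap aker|/cf0 ->] := pselect (critical M n a).
  by rewrite -scalemxAl aker scaler0.
by rewrite scale0r mul0mx.
Qed.

End HodgeMatching.

Unset Implicit Arguments. Set Strict Implicit.

Theorem mainTheorem3 (R : realType) (d : nat -> nat)
    (D : forall n, 'M[R]_(d n.+1, d n)) (G : forall n, 'M[R]_(d n))
    (Rb : forall n, 'M[R]_(d n.+1)) (Lb : forall n, 'M[R]_(d n))
    (B : forall n, 'M[R]_(d n)) :
  is_complex D ->
  (forall n, inner_prod_mx (G n)) ->
  (forall n, svd_bases (G n.+1) (G n) (D n) (Rb n) (Lb n)) ->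
  hodge_basis D G Rb Lb B ->
  let M := hodge_matching D G Rb Lb B in
  [/\ morse_matching (bcoef D B) M,
      (forall n (x : 'rV[R]_(d n)),
         x *m lap D G n = 0 <->
         exists cf : 'I_(d n) -> R,
           (forall a : 'I_(d n), ~ critical M n a -> cf a = 0) /\
           x = \sum_(a : 'I_(d n)) cf a *: row a (B n)) &
      (forall n (a : 'I_(d n.+1)) (b : 'I_(d n)),
         critical M n.+1 a -> critical M n b ->
         morse_coef (bcoef D B) M n a b = 0)].
Proof.
move=> D_complex G_ip D_svd B_hodge M; split.
- exact: hodge_matching_morse.
- exact: ker_lap_critical_span.
- by move=> n a b _ _; apply: morse_coef_eq0; apply: bcoef_neq0_matched.
Qed.
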